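(* Let $G$ be a cohomologically finite dimensional locally compact second countable group. Then $\dim_{\mathbb{R}}\mathrm{Pol}_d(G)<+\infty$ for all $d\in\mathbb{N}$.
   Context: $G$ is cohomologically finite dimensional if $\dim_{\mathbb{R}}H^n(G,\mathcal{E})<\infty$ (continuous cohomology) for every finite dimensional continuous $G$-module $\mathcal{E}$ and every $n\in\mathbb{N}$. For $\xi\colon G\to\mathbb{R}$ and $g\in G$ let $(\partial_g\xi)(h)=\xi(g^{-1}h)-\xi(h)$. $\mathrm{Pol}_d(G)$ is the space of continuous $\xi\colon G\to\mathbb{R}$ such that $\partial_{g_1}\cdots\partial_{g_{d+1}}\xi\equiv0$ for all $g_1,\dots,g_{d+1}\in G$ (continuous polynomial maps of degree at most $d$). *)

From HB Require Import structures.
From mathcomp Require Import all_boot all_algebra.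
From mathcomp Require Import all_classical all_reals all_analysis.
Import GRing.Theory Num.Theory numFieldNormedType.Exports.

Set Implicit Arguments.
Unset Strict Implicit.
Unset Printing Implicit Defensive.

Local Open Scope ring_scope.

Section Defs.
Variable G : topologicalType.
Variables (mul : G -> G -> G) (inv : G -> G) (e : G).

Definition is_topological_group : Prop :=
  [/\ (forall x y z, mul x (mul y z) = mul (mul x y) z),
      (forall x, mul e x = x /\ mul x e = x),
      (forall x, mul (inv x) x = e /\ mul x (inv x) = e),
      continuous (fun p : G * G => mul p.1 p.2) &
      continuous inv].

Variable R : realType.

(** A finite dimensional continuous G-module, realised (after a choice of
    basis) as R^m = 'cV[R]_m with G acting by rho : G -> 'M[R]_m, such that the
    action map G * E -> E, (g, v) |-> rho g *m v, is continuous. *)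
Definition is_cont_module (m : nat) (rho : G -> 'M[R]_m) : Prop :=
  [/\ rho e = 1%:M,
      (forall g h, rho (mul g h) = rho g *m rho h) &
      continuous (fun p : G * 'cV[R]_m => rho p.1 *m p.2)].

Section Cochains.
Variables (m : nat) (rho : G -> 'M[R]_m).

(** Inhomogeneous n-cochains are functions G^n -> E; G^n is represented by
    sequences of length n (values on other lengths are irrelevant).
    Continuity is for the product topology on G^n. *)
Definition cochain_cont (n : nat) (f : seq G -> 'cV[R]_m) : Prop :=
  forall s, size s = n -> forall V, nbhs (f s) V ->
    exists U : nat -> set G,
      (forall i, (i < n)%N -> nbhs (nth e s i) (U i)) /\
      (forall t, size t = n -> (forall i, (i < n)%N -> U i (nth e t i)) ->
         V (f t)).

(** Coboundary d : C^n -> C^(n+1):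
    (df)(g_1,...,g_{n+1}) = g_1 . f(g_2,...,g_{n+1})
      + sum_{i=1}^n (-1)^i f(g_1,...,g_i g_{i+1},...,g_{n+1})
      + (-1)^(n+1) f(g_1,...,g_n). *)
Definition cobound (n : nat) (f : seq G -> 'cV[R]_m) : seq G -> 'cV[R]_m :=
  fun s =>
    rho (head e s) *m f (behead s)
    + \sum_(i < n) ((-1) ^+ i.+1) *:
          f (take i s ++ mul (nth e s i) (nth e s i.+1) :: drop i.+2 s)
    + ((-1) ^+ n.+1) *: f (take n s).

Definition cocycle (n : nat) (z : seq G -> 'cV[R]_m) : Prop :=
  cochain_cont n z /\ (forall s, size s = n.+1 -> cobound n z s = 0).

(** dim_R H^n_cont(G, E) < oo : the space Z^n / B^n is spanned by finitely
    many classes. *)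
Definition cohom_finite_dim (n : nat) : Prop :=
  exists (k : nat) (c : 'I_k -> seq G -> 'cV[R]_m),
    (forall j, cocycle n (c j)) /\
    (forall z, cocycle n z ->
       exists (a : 'I_k -> R) (psi : seq G -> 'cV[R]_m),
         (match n with 0 => True | n'.+1 => cochain_cont n' psi end) /\
         (forall s, size s = n ->
            z s = \sum_(j < k) a j *: c j s
                  + (match n with 0 => 0 | n'.+1 => cobound n' psi s end))).

End Cochains.

Definition cohomologically_finite_dimensional : Prop :=
  forall (m : nat) (rho : G -> 'M[R]_m), is_cont_module rho ->
    forall n : nat, cohom_finite_dim rho n.

Definition pdiff (g : G) (xi : G -> R) : G -> R :=
  fun h => xi (mul (inv g) h) - xi h.

Definition Pol (d : nat) (xi : G -> R) : Prop :=
  continuous xi /\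
  (forall gs : seq G, size gs = d.+1 -> foldr pdiff xi gs = (fun _ => 0)).

Definition Pol_finite_dim (d : nat) : Prop :=
  exists (k : nat) (b : 'I_k -> G -> R),
    (forall j, Pol d (b j)) /\
    (forall xi, Pol d xi ->
       exists a : 'I_k -> R, xi = (fun h => \sum_(j < k) a j * b j h)).

End Defs.

From HB Require Import structures.
From mathcomp Require Import all_boot all_algebra.
From mathcomp Require Import all_classical all_reals all_analysis.
From mathcomp Require Import ring.
Import GRing.Theory Num.Theory numFieldNormedType.Exports.

(** Pol_0(G) consists of the constants. Suppose Pol_d(G) is finite dimensional
    and choose points p_l and functions u_l in Pol_d(G) with u_i(p_l) = δ_il and
    f = Σ_l f(p_l) u_l on Pol_d(G). Through f ↦ (f(p_l))_l, left translation
    makes Pol_d(G) a continuous G-module E ≅ R^N. For ξ in Pol_{d+1}(G) the map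
    g ↦ ∂_g ξ is a continuous 1-cocycle with values in E, depending linearly
    on ξ; the coboundary of ψ ∈ E is the cocycle of ψ itself, and the cocycle
    of ξ vanishes only when ξ is constant. Hence, modulo Pol_d(G), ξ is
    determined by the class of its cocycle in the finite dimensional H^1(G, E),
    and finitely many ξ whose classes span all the classes that occur span
    Pol_{d+1}(G) together with Pol_d(G). *)

Set Implicit Arguments.
Unset Strict Implicit.
Unset Printing Implicit Defensive.
Local Open Scope classical_set_scope.
Local Open Scope ring_scope.

Section FunctionSpaces.
Variables (X : Type) (K : fieldType).
Implicit Types (S : set (X -> K)) (f g : X -> K).

Definition lin_closed S :=
  S (fun=> 0) /\ forall f g a b, S f -> S g -> S (fun x => a * f x + b * g x).

Definition finite_dim S :=
  exists k (b : 'I_k -> X -> K), (forall j, S (b j)) /\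
    forall f, S f -> exists a : 'I_k -> K, f = (fun x => \sum_j a j * b j x).

Section LinClosed.
Variable S : set (X -> K).
Hypothesis S_lin : lin_closed S.

Lemma lin_closedD f g : S f -> S g -> S (fun x => f x + g x).
Proof.
move=> Sf Sg; rewrite (_ : (fun x => _) = fun x => 1 * f x + 1 * g x).
  exact: S_lin.2.
by apply: funext => x; rewrite !mul1r.
Qed.

Lemma lin_closedB f g : S f -> S g -> S (fun x => f x - g x).
Proof.
move=> Sf Sg; rewrite (_ : (fun x => _) = fun x => 1 * f x + (-1) * g x).
  exact: S_lin.2.
by apply: funext => x; rewrite mul1r mulN1r.
Qed.

Lemma lin_closedZ f a : S f -> S (fun x => a * f x).
Proof.
move=> Sf; rewrite (_ : (fun x => _) = fun x => a * f x + 0 * f x).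
  exact: S_lin.2.
by apply: funext => x; rewrite mul0r addr0.
Qed.

Lemma lin_closed_sum n (a : 'I_n -> K) (b : 'I_n -> X -> K) :
  (forall i, S (b i)) -> S (fun x => \sum_i a i * b i x).
Proof.
elim: n a b => [|n IH] a b Sb.
  rewrite (_ : (fun x => _) = fun=> 0); first exact: S_lin.1.
  by apply: funext => x; rewrite big_ord0.
rewrite (_ : (fun x => _) = fun x =>
    \sum_(i < n) a (widen_ord (leqnSn n) i) * b (widen_ord (leqnSn n) i) x
    + a ord_max * b ord_max x).
  exact: lin_closedD (IH _ _ (fun i => Sb _)) (lin_closedZ _ (Sb ord_max)).
by apply: funext => x; rewrite big_ord_recr.
Qed.

End LinClosed.

Definition fam_cat T k1 k2 (b1 : 'I_k1 -> T) (b2 : 'I_k2 -> T) (j : 'I_(k1 + k2)) :=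
  match fintype.split j with inl i => b1 i | inr i => b2 i end.

Lemma sum_fam_cat k1 k2 (a1 : 'I_k1 -> K) (a2 : 'I_k2 -> K)
    (b1 : 'I_k1 -> X -> K) (b2 : 'I_k2 -> X -> K) x :
  \sum_j fam_cat a1 a2 j * fam_cat b1 b2 j x =
  \sum_i a1 i * b1 i x + \sum_i a2 i * b2 i x.
Proof.
rewrite big_split_ord /fam_cat; congr (_ + _); apply: eq_bigr => i _.
  by rewrite (unsplitK (inl i) : fintype.split (lshift k2 i) = inl i).
by rewrite (unsplitK (inr i) : fintype.split (rshift k1 i) = inr i).
Qed.

Lemma finite_dim_ext S S' n (F : 'I_n -> X -> K) :
  finite_dim S' -> S' `<=` S -> (forall i, S (F i)) ->
  (forall f, S f -> exists (a : 'I_n -> K) g,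
     S' g /\ forall x, f x = \sum_i a i * F i x + g x) ->
  finite_dim S.
Proof.
move=> [k [b [S'b b_span]]] S'S SF F_span.
exists (n + k)%N, (fam_cat F b); split.
  by move=> j; rewrite /fam_cat; case: fintype.split => i; [exact: SF | exact/S'S].
move=> f /F_span [a [g [S'g fE]]]; have [a' gE] := b_span g S'g.
by exists (fam_cat a a'); apply: funext => x; rewrite fE sum_fam_cat gE.
Qed.

Section Interpolation.
Variable N : nat.
Implicit Types (u : 'I_N -> X -> K) (p : 'I_N -> X).

Definition biorthogonal u p := forall i l, u i (p l) = (i == l)%:R.

Definition interpolates u p f := forall x, f x = \sum_i f (p i) * u i x.

Lemma sum_biorthogonal u p (c : 'I_N -> K) l :
  biorthogonal u p -> \sum_i c i * u i (p l) = c l.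
Proof.
move=> up; rewrite (bigD1 l) //= up eqxx mulr1 big1 ?addr0 // => i /negPf il.
by rewrite up il mulr0.
Qed.

Lemma interpolates_sum u p k (a : 'I_k -> K) (b : 'I_k -> X -> K) :
  (forall j, interpolates u p (b j)) ->
  interpolates u p (fun x => \sum_j a j * b j x).
Proof.
move=> b_int x; under eq_bigr => j _ do rewrite (b_int j x) mulr_sumr.
rewrite exchange_big; apply: eq_bigr => i _; rewrite mulr_suml.
by apply: eq_bigr => j _; rewrite mulrA.
Qed.

End Interpolation.

(* If b is not yet interpolated, its residual r vanishes at every p l but not at
   some q: add q as a new node, with r normalised at q as its dual function. *)
Lemma interpolation_extend S N (u : 'I_N -> X -> K) (p : 'I_N -> X) b :
  lin_closed S -> (forall i, S (u i)) -> biorthogonal u p -> S b ->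
  exists N' (u' : 'I_N' -> X -> K) (p' : 'I_N' -> X),
    [/\ forall i, S (u' i), biorthogonal u' p',
        forall f, interpolates u p f -> interpolates u' p' f &
        interpolates u' p' b].
Proof.
move=> S_lin Su up Sb.
pose r x := b x - \sum_i b (p i) * u i x.
have Sr : S r by apply: lin_closedB => //; exact: lin_closed_sum.
have r_p l : r (p l) = 0 by rewrite /r /= (sum_biorthogonal _ _ up) subrr.
have [[q rq] | r0] := pselect (exists q, r q != 0); last first.
  exists N, u, p; split=> // x; apply/eqP; rewrite -subr_eq0 -/(r x).
  by apply/negPn/negP => rx; apply: r0; exists x.
pose w x := (r q)^-1 * r x.
have w_q : w q = 1 by rewrite /w mulVf.
have w_p l : w (p l) = 0 by rewrite /w r_p mulr0.
pose u' j := if unlift ord_max j is Some i then fun x => u i x - u i q * w x else w.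
pose p' j := if unlift ord_max j is Some i then p i else q.
have sum_u' f x : \sum_j f (p' j) * u' j x =
    \sum_i f (p i) * u i x - (\sum_i f (p i) * u i q) * w x + f q * w x.
  rewrite big_ord_recr /= /u' /p' unlift_none mulr_suml -sumrB; congr (_ + _).
  apply: eq_bigr => i _.
  have -> : widen_ord (leqnSn N) i = lift ord_max i.
    exact/val_inj/esym/lift_max.
  by rewrite liftK mulrBr mulrA.
exists N.+1, u', p'; split.
- have Sw : S w by exact: lin_closedZ.
  move=> j; rewrite /u'; case: unliftP => [i|] _ //.
  exact (lin_closedB S_lin (Su i) (lin_closedZ S_lin (u i q) Sw)).
- move=> j l; rewrite /u' /p'.
  case: unliftP => [i|] ->; case: unliftP => [i'|] ->.
  + by rewrite w_p mulr0 subr0 up (inj_eq lift_inj).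
  + by rewrite w_q mulr1 subrr eq_sym (negPf (neq_lift _ _)).
  + by rewrite w_p (negPf (neq_lift _ _)).
  + by rewrite w_q eqxx.
- move=> f f_int x; rewrite sum_u' -(f_int x) -(f_int q); ring.
- move=> x; rewrite sum_u'.
  have rx : r x = r q * w x by rewrite /w mulrA mulfV // mul1r.
  rewrite -[b x](subrK (\sum_i b (p i) * u i x)) -/(r x) rx /r; ring.
Qed.

Lemma interpolation_basis S : lin_closed S -> finite_dim S ->
  exists N (u : 'I_N -> X -> K) (p : 'I_N -> X),
    [/\ forall i, S (u i), biorthogonal u p & forall f, S f -> interpolates u p f].
Proof.
move=> S_lin [k [b [Sb b_span]]].
have : forall m, (m <= k)%N -> exists N (u : 'I_N -> X -> K) (p : 'I_N -> X),
    [/\ forall i, S (u i), biorthogonal u p &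
        forall j : 'I_k, (j < m)%N -> interpolates u p (b j)].
  elim=> [|m IH] mk.
    exists 0%N, (fun _ _ => 0), (fun i : 'I_0 => match notF (ltn_ord i) with end).
    by split=> //; [move=> i; exact: S_lin.1 | case].
  have [N [u [p [Su up b_int]]]] := IH (ltnW mk).
  have [N' [u' [p' [Su' up' ext b_int']]]] :=
    interpolation_extend S_lin Su up (Sb (Ordinal mk)).
  exists N', u', p'; split=> // j; rewrite ltnS leq_eqVlt => /orP[/eqP jm | jm].
    by have -> : j = Ordinal mk by apply: val_inj.
  exact: ext (b_int j jm).
move=> /(_ k (leqnn k)) [N [u [p [Su up b_int]]]].
exists N, u, p; split=> // f /b_span [a ->].
exact: interpolates_sum (fun j => b_int j (ltn_ord j)).
Qed.

End FunctionSpaces.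

Lemma exists_spanning_family (T : Type) (K : fieldType) (vT : vectType K)
    (A : set T) (f : T -> vT) :
  exists n (t : 'I_n -> T), (forall i, A (t i)) /\
    forall x, A x -> exists a : 'I_n -> K, f x = \sum_i a i *: f (t i).
Proof.
pose P m := `[< exists n (t : 'I_n -> T),
  (forall i, A (t i)) /\ \dim <<[tuple f (t i) | i < n]>> = m >].
have P0 : P 0%N.
  apply/asboolP; exists 0%N, (fun i : 'I_0 => match notF (ltn_ord i) with end).
  by split=> [[]//|]; rewrite tuple0 span_nil dimv0.
have P_ub m : P m -> (m <= \dim (fullv : {vspace vT}))%N.
  by case/asboolP=> n [t [_ <-]]; exact/dimvS/subvf.
(* A family of maximal rank: appending any x does not increase it. *)
have [m /asboolP [n [t [At t_dim]]] m_max] := ex_maxnP (ex_intro _ 0%N P0) P_ub.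
exists n, t; split=> // x Ax.
pose t' j := if unlift ord_max j is Some i then t i else x.
have t_t' : (<<[tuple f (t i) | i < n]>> <= <<[tuple f (t' j) | j < n.+1]>>)%VS.
  apply: sub_span => _ /tnthP[i ->]; rewrite tnth_mktuple.
  have -> : t i = t' (lift ord_max i) by rewrite /t' liftK.
  by rewrite -(tnth_mktuple (fun j => f (t' j))) mem_tnth.
have fx : f x \in <<[tuple f (t' j) | j < n.+1]>>%VS.
  have -> : x = t' ord_max by rewrite /t' unlift_none.
  by rewrite memv_span // -(tnth_mktuple (fun j => f (t' j))) mem_tnth.
have /eqP t_span : <<[tuple f (t i) | i < n]>>%VS == <<[tuple f (t' j) | j < n.+1]>>%VS.
  rewrite eqEdim t_t' t_dim m_max //; apply/asboolP; exists n.+1, t'.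
  by split=> // j; rewrite /t'; case: unliftP.
rewrite -t_span in fx; exists (coord [tuple f (t i) | i < n] ^~ (f x)).
by rewrite {1}(coord_span fx); apply: eq_bigr => i _; rewrite -tnth_nth tnth_mktuple.
Qed.

Section TopologicalGroup.
Variables (G : topologicalType) (mul : G -> G -> G) (inv : G -> G) (e : G).
Hypothesis HG : is_topological_group mul inv e.

Let mulA x y z : mul x (mul y z) = mul (mul x y) z. Proof. by case: HG. Qed.
Let mul1g x : mul e x = x. Proof. by case: HG => _ /(_ x) []. Qed.
Let mulg1 x : mul x e = x. Proof. by case: HG => _ /(_ x) []. Qed.
Let mulVg x : mul (inv x) x = e. Proof. by case: HG => _ _ /(_ x) []. Qed.
Let mulgV x : mul x (inv x) = e. Proof. by case: HG => _ _ /(_ x) []. Qed.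

Lemma inv_uniq x y : mul x y = e -> inv x = y.
Proof. by move=> xy; rewrite -[inv x]mulg1 -xy mulA mulVg mul1g. Qed.

Lemma invM x y : inv (mul x y) = mul (inv y) (inv x).
Proof. by apply: inv_uniq; rewrite mulA -(mulA x) mulgV mulg1 mulgV. Qed.

Lemma inv1 : inv e = e.
Proof. by apply: inv_uniq; rewrite mul1g. Qed.

Lemma continuous_mull x : continuous (mul x).
Proof.
move=> y; apply: (@continuous_comp _ _ _ (pair x) (fun p : G * G => mul p.1 p.2)).
  by apply: cvg_pair; [exact: cvg_cst | exact: cvg_id].
by case: HG => _ _ _ + _; apply.
Qed.

Lemma continuous_inv_mulr y : continuous (fun x => mul (inv x) y).
Proof.
move=> x; apply: (@continuous_comp _ _ _ inv (fun z => mul z y)).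
  by case: HG => _ _ _ _; apply.
apply: (@continuous_comp _ _ _ (fun z => (z, y)) (fun p : G * G => mul p.1 p.2)).
  by apply: cvg_pair; [exact: cvg_id | exact: cvg_cst].
by case: HG => _ _ _ + _; apply.
Qed.

Variable R : realType.
Implicit Types (f : G -> R) (d : nat).
Local Notation pd := (@pdiff G mul inv R).

Lemma pdiff_eq0_const f : (forall g x, pdiff mul inv g f x = 0) -> forall x, f x = f e.
Proof. by move=> f0 x; apply/eqP; rewrite eq_sym -subr_eq0 -(f0 x x) /pdiff mulVg. Qed.

Lemma foldr_pdiff_lin f (f' : G -> R) a b gs :
  foldr pd (fun x => a * f x + b * f' x) gs =
  (fun x => a * foldr pd f gs x + b * foldr pd f' gs x).
Proof.
by elim: gs => [//|h gs IH] /=; rewrite IH; apply: funext => x; rewrite /pdiff; ring.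
Qed.

Lemma Pol_lin_closed d : lin_closed (Pol mul inv (R:=R) d).
Proof.
split.
  split=> [x|gs _]; first exact: cvg_cst.
  elim: gs => [//|h gs IH] /=; rewrite IH.
  by apply: funext => x; rewrite /pdiff subrr.
move=> f f' a b [cf f0] [cf' f'0]; split.
  move=> x; apply: (@cvgD _ _ _ _ _ (fun x => a * f x) (fun x => b * f' x)).
    by apply: (@cvgM _ _ _ _ (fun=> a) f); [exact: cvg_cst | exact: cf].
  by apply: (@cvgM _ _ _ _ (fun=> b) f'); [exact: cvg_cst | exact: cf'].
by move=> gs gsd; rewrite foldr_pdiff_lin f0 // f'0 //; apply: funext => x; ring.
Qed.

Lemma Pol_succ d f : Pol mul inv d f -> Pol mul inv d.+1 f.
Proof.
move=> [cf f0]; split=> //; case=> [//|h gs] /= [gsd].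
by rewrite f0 // /pdiff; apply: funext => x; rewrite subrr.
Qed.

Lemma Pol_const d (c : R) : Pol mul inv d (fun=> c).
Proof.
elim: d => [|d IH]; last exact: Pol_succ.
split=> [x|]; first exact: cvg_cst.
by case=> [|h []] //= _; apply: funext => x; rewrite /pdiff subrr.
Qed.

Lemma Pol_pdiff d h f : Pol mul inv d.+1 f -> Pol mul inv d (pdiff mul inv h f).
Proof.
move=> [cf f0]; split.
  move=> x; apply: cvgB; last exact: cf.
  by apply: (continuous_comp (f := mul (inv h))); [exact: continuous_mull | exact: cf].
by move=> gs gsd; rewrite -foldr_rcons f0 // size_rcons gsd.
Qed.

Lemma Pol_translate d h f :
  Pol mul inv d f -> Pol mul inv d (fun x => f (mul (inv h) x)).
Proof.
move=> Pf; rewrite (_ : (fun x => _) = fun x => f x + pdiff mul inv h f x).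
  exact (lin_closedD (Pol_lin_closed d) Pf (Pol_pdiff h (Pol_succ Pf))).
by apply: funext => x; rewrite /pdiff addrC subrK.
Qed.

End TopologicalGroup.

Section MatrixContinuity.
Variable R : realType.

Lemma continuous_mx (T : topologicalType) m n (f : T -> 'M[R]_(m, n)) :
  (forall i j, continuous (fun x => f x i j)) -> continuous f.
Proof.
move=> f_cont x A /nbhs_ballP[eps /= eps0 epsA].
have : \forall y \near x, forall i j, ball (f x i j) eps (f y i j).
  apply: filter_forall => i; apply: filter_forall => j.
  exact: (f_cont i j x) (nbhsx_ballx _ _ eps0).
by apply: filterS => y fxy; apply: epsA; split.
Qed.

Lemma continuous_mx_entry m n (i : 'I_m) (j : 'I_n) :
  continuous (fun M : 'M[R]_(m, n) => M i j).
Proof.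
move=> M A /nbhs_ballP[eps /= eps0 epsA].
by apply/nbhs_ballP; exists eps => // M' [_ MM']; apply: epsA; exact: MM' i j.
Qed.

End MatrixContinuity.

Lemma cochain_cont_head (G : topologicalType) (e : G) (R : realType) m
    (z : G -> 'cV[R]_m) :
  continuous z -> cochain_cont e 1 (fun s => z (head e s)).
Proof.
move=> z_cont [|g []] //= _ V zV; exists (fun=> z @^-1` V); split.
  by move=> i; rewrite ltnS leqn0 => /eqP -> /=; exact: z_cont.
by move=> [|g' []] //= _ /(_ 0%N isT).
Qed.

Section PolynomialCocycle.
Variables (G : topologicalType) (mul : G -> G -> G) (inv : G -> G) (e : G).
Hypothesis HG : is_topological_group mul inv e.
Variables (R : realType) (d N : nat) (u : 'I_N -> G -> R) (p : 'I_N -> G).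
Hypothesis Pol_u : forall i, Pol mul inv d (u i).
Hypothesis up : biorthogonal u p.
Hypothesis u_int : forall f, Pol mul inv d f -> interpolates u p f.

Let mulA x y z : mul x (mul y z) = mul (mul x y) z. Proof. by case: HG. Qed.
Let mul1g x : mul e x = x. Proof. by case: HG => _ /(_ x) []. Qed.

(* Left translation f |-> f (inv g * _) on Pol_d(G), in the coordinates
   f |-> (f (p l))_l. *)
Definition transl_rep g : 'M[R]_N := \matrix_(l, i) u i (mul (inv g) (p l)).

Definition diff_cocycle (xi : G -> R) g : 'cV[R]_N :=
  \col_l pdiff mul inv g xi (p l).

Lemma transl_rep_module : is_cont_module mul e transl_rep.
Proof.
split.
- by apply/matrixP => l i; rewrite !mxE (inv1 HG) mul1g up eq_sym.
- move=> g h; apply/matrixP => l i; rewrite !mxE; under eq_bigr do rewrite !mxE.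
  rewrite (invM HG) -mulA (u_int (Pol_translate HG h (Pol_u i))).
  by apply: eq_bigr => j _; rewrite mulrC.
- apply: continuous_mx => l j.
  have -> : (fun x : G * 'cV[R]_N => (transl_rep x.1 *m x.2) l j) =
            (fun x => \sum_i u i (mul (inv x.1) (p l)) * x.2 i j).
    by apply: funext => x; rewrite !mxE; apply: eq_bigr => i _; rewrite !mxE.
  apply: continuous_big; first exact: add_continuous.
  move=> i _ x.
  apply: (continuousM (s := fun x : G * 'cV[R]_N => u i (mul (inv x.1) (p l)))
    (t := fun x => x.2 i j)).
    apply: (@continuous_comp _ _ _ fst (fun g => u i (mul (inv g) (p l)))).
      exact: cvg_fst.
    apply: (@continuous_comp _ _ _ (fun g => mul (inv g) (p l)) (u i)).
      exact: (continuous_inv_mulr HG).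
    by case: (Pol_u i) => + _; apply.
  apply: (@continuous_comp _ _ _ snd (fun v : 'cV[R]_N => v i j)).
    exact: cvg_snd.
  exact: continuous_mx_entry.
Qed.

Lemma diff_cocycleB xi xi' g :
  diff_cocycle (fun x => xi x - xi' x) g = diff_cocycle xi g - diff_cocycle xi' g.
Proof. by apply/matrixP => l j; rewrite !mxE /pdiff; ring. Qed.

Lemma diff_cocycle_sum n (a : 'I_n -> R) (F : 'I_n -> G -> R) g :
  diff_cocycle (fun x => \sum_i a i * F i x) g = \sum_i a i *: diff_cocycle (F i) g.
Proof.
apply/matrixP => l j; rewrite !mxE summxE /pdiff -sumrB.
by apply: eq_bigr => i _; rewrite !mxE /pdiff; ring.
Qed.

Lemma continuous_diff_cocycle xi : continuous xi -> continuous (diff_cocycle xi).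
Proof.
move=> xi_cont; apply: continuous_mx => l j.
have -> : (fun g => diff_cocycle xi g l j) =
          (fun g => xi (mul (inv g) (p l)) - xi (p l)).
  by apply: funext => g; rewrite !mxE.
move=> g; apply: cvgB; last exact: cvg_cst.
apply: (@continuous_comp _ _ _ (fun g => mul (inv g) (p l)) xi); last exact: xi_cont.
exact: (continuous_inv_mulr HG).
Qed.

Lemma diff_cocycle_mul xi g h : Pol mul inv d.+1 xi ->
  diff_cocycle xi (mul g h) = transl_rep g *m diff_cocycle xi h + diff_cocycle xi g.
Proof.
move=> Pxi; apply/matrixP => l j; rewrite !mxE; under eq_bigr do rewrite !mxE.
under eq_bigr do rewrite mulrC.
rewrite -(u_int (Pol_pdiff HG h Pxi)) /pdiff (invM HG) -mulA; ring.
Qed.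

Lemma diff_cocycle_cocycle xi : Pol mul inv d.+1 xi ->
  cocycle mul e transl_rep 1 (fun s => diff_cocycle xi (head e s)).
Proof.
move=> Pxi; split.
  by apply: cochain_cont_head; apply: continuous_diff_cocycle; case: Pxi.
case=> [|g [|h []]] //= _; rewrite /cobound big_ord1 /= diff_cocycle_mul //.
by rewrite expr1 sqrrN expr1n scaleN1r scale1r opprD addrA subrr add0r addNr.
Qed.

Lemma cobound0_diff_cocycle (psi : seq G -> 'cV[R]_N) g :
  cobound mul e transl_rep 0 psi [:: g] =
  diff_cocycle (fun x => \sum_i psi [::] i 0 * u i x) g.
Proof.
apply/matrixP => l j; rewrite /cobound big_ord0 addr0 !mxE (ord1 j) /pdiff.
rewrite (sum_biorthogonal _ _ up) expr1 mulN1r; congr (_ - _).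
by apply: eq_bigr => i _; rewrite !mxE mulrC.
Qed.

Lemma diff_cocycle_eq0_const xi : Pol mul inv d.+1 xi ->
  (forall g, diff_cocycle xi g = 0) -> forall x, xi x = xi e.
Proof.
move=> Pxi xi0; apply: (pdiff_eq0_const HG) => g x.
rewrite (u_int (Pol_pdiff HG g Pxi) x) big1 // => i _.
by have /matrixP/(_ i 0) := xi0 g; rewrite !mxE => ->; rewrite mul0r.
Qed.

Variables (k : nat) (c : 'I_k -> seq G -> 'cV[R]_N).
Hypothesis c_span : forall z, cocycle mul e transl_rep 1 z ->
  exists (a : 'I_k -> R) (psi : seq G -> 'cV[R]_N), cochain_cont e 0 psi /\
    forall s, size s = 1%N ->
      z s = \sum_j a j *: c j s + cobound mul e transl_rep 0 psi s.

Definition cocycle_coords xi (a : 'rV[R]_k) := Pol mul inv d.+1 xi /\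
  forall g, diff_cocycle xi g = \sum_j a 0 j *: c j [:: g].

Lemma exists_cocycle_coords xi : Pol mul inv d.+1 xi ->
  exists v a, Pol mul inv d v /\ cocycle_coords (fun x => xi x - v x) a.
Proof.
move=> Pxi; have [a [psi [_ xi_coh]]] := c_span (diff_cocycle_cocycle Pxi).
have Pv : Pol mul inv d (fun x => \sum_i psi [::] i 0 * u i x).
  exact (lin_closed_sum (Pol_lin_closed mul inv R d) _ Pol_u).
exists (fun x => \sum_i psi [::] i 0 * u i x), (\row_j a j); split=> //; split.
  exact (lin_closedB (Pol_lin_closed mul inv R _) Pxi (Pol_succ Pv)).
move=> g; rewrite diff_cocycleB -cobound0_diff_cocycle.
have := xi_coh [:: g] erefl; rewrite /= => ->; rewrite addrK.
by apply: eq_bigr => j _; rewrite mxE.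
Qed.

Lemma cocycle_coords_const xi a n (F : 'I_n -> G -> R) (aF : 'I_n -> 'rV[R]_k)
    (b : 'I_n -> R) :
  cocycle_coords xi a -> (forall i, cocycle_coords (F i) (aF i)) ->
  a = \sum_i b i *: aF i ->
  forall x, xi x - \sum_i b i * F i x = xi e - \sum_i b i * F i e.
Proof.
have Pol_lin := Pol_lin_closed mul inv R d.+1.
move=> [Pxi xi_a] F_aF a_b; apply: diff_cocycle_eq0_const.
  exact (lin_closedB Pol_lin Pxi (lin_closed_sum Pol_lin b (fun i => (F_aF i).1))).
move=> g; rewrite diff_cocycleB diff_cocycle_sum xi_a.
under [X in _ - X]eq_bigr => i _ do rewrite (F_aF i).2 scaler_sumr.
rewrite exchange_big -sumrB big1 // => j _.
by rewrite a_b summxE scaler_suml -sumrB big1 // => i _; rewrite mxE scalerA subrr.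
Qed.

(* The coordinates of a cocycle need not be unique (the c_j may be dependent),
   so we span the set of pairs (xi, a) rather than a set of functions. *)
Lemma Pol_succ_finite_dim : Pol_finite_dim mul inv R d.+1.
Proof.
pose A (w : (G -> R) * 'rV[R]_k) := cocycle_coords w.1 w.2.
have [n [t [At t_span]]] := exists_spanning_family A snd.
apply: (finite_dim_ext (S' := Pol mul inv d) (F := fun i => (t i).1)).
- by exists N, u; split=> // f /u_int f_int; exists (fun i => f (p i)); exact: funext.
- exact: Pol_succ.
- by move=> i; case: (At i).
move=> xi Pxi; have [v [a [Pv xi_a]]] := exists_cocycle_coords Pxi.
have [b /= a_b] := t_span (_, a) xi_a.
have D_const := cocycle_coords_const xi_a At a_b.
exists b, (fun x => v x + (xi e - v e - \sum_i b i * (t i).1 e)); split.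
  exact (lin_closedD (Pol_lin_closed mul inv R d) Pv (Pol_const mul inv _ _)).
by move=> x; rewrite -(D_const x); ring.
Qed.

End PolynomialCocycle.

Lemma Pol0_finite_dim (G : topologicalType) (mul : G -> G -> G) (inv : G -> G) (e : G)
    (R : realType) :
  is_topological_group mul inv e -> Pol_finite_dim mul inv R 0.
Proof.
move=> HG; exists 1%N, (fun _ _ => 1); split=> [_|xi [_ xi0]].
  exact: Pol_const.
exists (fun=> xi e); apply: funext => x; rewrite big_ord1 mulr1.
apply: (pdiff_eq0_const HG) => g y.
by have := congr1 (fun f => f y) (xi0 [:: g] erefl).
Qed.

Lemma Pol_finite_dim_succ (G : topologicalType) (mul : G -> G -> G) (inv : G -> G)
    (e : G) (R : realType) d :
  is_topological_group mul inv e -> cohomologically_finite_dimensional mul e R ->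
  Pol_finite_dim mul inv R d -> Pol_finite_dim mul inv R d.+1.
Proof.
move=> HG cfd /(interpolation_basis (Pol_lin_closed mul inv R d)).
move=> [N [u [p [Pu up u_int]]]].
have [k [c [_ c_span]]] := cfd _ _ (transl_rep_module HG Pu up u_int) 1%N.
exact (Pol_succ_finite_dim HG Pu up u_int c_span).
Qed.

Theorem corollary6p7 (R : realType) (G : topologicalType)
    (mul : G -> G -> G) (inv : G -> G) (e : G)
    (HG : is_topological_group mul inv e)
    (Hhaus : hausdorff_space G)
    (Hlc : locally_compact [set: G])
    (Hsc : @second_countable G)
    (Hcfd : @cohomologically_finite_dimensional G mul e R) :
  forall d : nat, @Pol_finite_dim G mul inv R d.
Proof.
elim=> [|d IH]; first exact: Pol0_finite_dim HG.
exact: Pol_finite_dim_succ HG Hcfd IH.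
Qed.
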